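(* Let $R$ be a local ring. Let $\mathcal{A}$ be a finite $R$-Hopf algebra and let $S$ be a faithful left $\mathcal{A}$-module algebra which is a finite $R$-algebra with $\mathrm{rank}_R(S)=\mathrm{rank}_R(\mathcal{A})$, and assume $S^{\mathcal{A}}=R$. Then $S$ is a tame $\mathcal{A}$-extension of $R$ if and only if there exists a left $\mathcal{A}$-module homomorphism $g:\mathcal{A}^\ast\to S$ with $g(1)=1$. Moreover, if $R$ is a field and $S$ is a tame $\mathcal{A}$-extension of $R$, then every right relative $(S,\mathcal{A}^\ast)$-Hopf module is an injective $\mathcal{A}^\ast$-comodule.
   Context: A finite $R$-algebra (resp. finite $R$-Hopf algebra) is one that is finitely generated projective as an $R$-module. $\mathcal{A}^\ast=\mathrm{Hom}_R(\mathcal{A},R)$ is the dual Hopf algebra, with its usual left $\mathcal{A}$-module structure $(a\cdot f)(b)=f(ba)$; its unit $1$ is the counit $\varepsilon$ of $\mathcal{A}$. For a left $\mathcal{A}$-module $V$, $V^{\mathcal{A}}=\{v\in V: av=\varepsilon(a)v \text{ for all } a\in\mathcal{A}\}$. The set of left integrals of $\mathcal{A}$ is $I=\mathcal{A}^{\mathcal{A}}=\{\lambda\in\mathcal{A}: a\lambda=\varepsilon(a)\lambda\ \forall a\}$, and $IS$ denotes the $R$-submodule of $S$ generated by the elements $\lambda s$, $\lambda\in I$, $s\in S$. $S$ is a faithful $\mathcal{A}$-module if $as=0$ for all $s\in S$ implies $a=0$. $S$ is a tame $\mathcal{A}$-extension of $R$ if $S$ is a finite $R$-algebra and left $\mathcal{A}$-module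 algebra with $S^{\mathcal{A}}=R$, $\mathrm{rank}_R(\mathcal{A})=\mathrm{rank}_R(S)$, $S$ is a faithful $\mathcal{A}$-module, and $IS=R$. Since $\mathcal{A}$ is finite, the left $\mathcal{A}$-module algebra structure on $S$ corresponds to a right $\mathcal{A}^\ast$-comodule algebra structure on $S$; a right relative $(S,\mathcal{A}^\ast)$-Hopf module is a right $S$-module $M$ with a right $\mathcal{A}^\ast$-comodule structure $m\mapsto m_{(0)}\otimes m_{(1)}$ such that $(ms)_{(0)}\otimes(ms)_{(1)}=m_{(0)}s_{(0)}\otimes m_{(1)}s_{(1)}$. *)

(* Finite (= finitely generated projective) modules over a
   local ring are free, so finite Hopf algebras / algebras are presented by
   structure constants w.r.t. a basis. *)
From HB Require Import structures.
From mathcomp Require Import all_boot all_order all_algebra.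
Set Implicit Arguments. Unset Strict Implicit. Unset Printing Implicit Defensive.
Import GRing.Theory.
Local Open Scope ring_scope.

(* R is local: nonzero (built into comUnitRingType) and non-units form an ideal *)
Definition local_ring (R : comUnitRingType) : Prop :=
  forall x y : R, x \isn't a GRing.unit -> y \isn't a GRing.unit ->
    x + y \isn't a GRing.unit.

(* A finite R-Hopf algebra of rank n, by structure constants on the basis
   e_0..e_{n-1}:  e_i e_j = sum_k hmul i j k e_k,  1 = sum_k hunit k e_k,
   Delta e_k = sum_{i,j} hcomul k i j e_i (x) e_j,  eps e_k = hcounit k,
   S e_i = sum_j hanti i j e_j. *)
Record hopf_consts (R : comUnitRingType) (n : nat) := HopfConsts {
  hmul : 'I_n -> 'I_n -> 'I_n -> R;
  hunit : 'I_n -> R;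
  hcomul : 'I_n -> 'I_n -> 'I_n -> R;
  hcounit : 'I_n -> R;
  hanti : 'I_n -> 'I_n -> R }.

(* An R-algebra S of rank m (structure constants) with an action of A:
   e_i . s_j = sum_k sact i j k s_k. *)
Record modalg_consts (R : comUnitRingType) (n m : nat) := ModAlgConsts {
  smul : 'I_m -> 'I_m -> 'I_m -> R;
  sunit : 'I_m -> R;
  sact : 'I_n -> 'I_m -> 'I_m -> R }.

Section Hopf.
Variables (R : comUnitRingType) (n : nat) (H : hopf_consts R n).

(* elements of A are coordinate rows; elements of A (x) A are n x n matrices *)
Definition Abasis (i : 'I_n) : 'rV[R]_n := delta_mx 0 i.
Definition Amul (a b : 'rV[R]_n) : 'rV[R]_n :=
  \row_k \sum_(i < n) \sum_(j < n) a 0 i * b 0 j * hmul H i j k.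
Definition Aone : 'rV[R]_n := \row_k hunit H k.
Definition Acomul (a : 'rV[R]_n) : 'M[R]_n :=
  \matrix_(i, j) \sum_(k < n) a 0 k * hcomul H k i j.
Definition Acounit (a : 'rV[R]_n) : R := \sum_(k < n) a 0 k * hcounit H k.
Definition Aanti (a : 'rV[R]_n) : 'rV[R]_n :=
  \row_j \sum_(i < n) a 0 i * hanti H i j.
Definition tmul (M N : 'M[R]_n) : 'M[R]_n :=
  \matrix_(p, q) \sum_(i < n) \sum_(j < n) \sum_(k < n) \sum_(l < n)
     M i j * N k l * hmul H i k p * hmul H j l q.

Definition is_hopf : Prop :=
  [/\ (forall a b c, Amul (Amul a b) c = Amul a (Amul b c)) /\
      (forall a, Amul Aone a = a /\ Amul a Aone = a),
      (forall a i j l, \sum_(k < n) Acomul a k l * hcomul H k i j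
                     = \sum_(k < n) Acomul a i k * hcomul H k j l),
      (forall a, (\row_j \sum_(i < n) Acomul a i j * hcounit H i) = a /\
                 (\row_i \sum_(j < n) Acomul a i j * hcounit H j) = a),
      [/\ (forall a b, Acomul (Amul a b) = tmul (Acomul a) (Acomul b)),
          Acomul Aone = \matrix_(i, j) (hunit H i * hunit H j),
          (forall a b, Acounit (Amul a b) = Acounit a * Acounit b) &
          Acounit Aone = 1] &
      (forall a,
        \sum_(i < n) \sum_(j < n) Acomul a i j *: Amul (Aanti (Abasis i)) (Abasis j)
          = Acounit a *: Aone /\
        \sum_(i < n) \sum_(j < n) Acomul a i j *: Amul (Abasis i) (Aanti (Abasis j))
          = Acounit a *: Aone)].

Definition left_integral (l : 'rV[R]_n) : Prop :=
  forall a, Amul a l = Acounit a *: l.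

(* dual A^* : rows f with f(a) = sum_i f_i a_i; unit of A^* is eps *)
Definition dual_one : 'rV[R]_n := \row_k hcounit H k.
(* (a . f)(b) = f (b a) *)
Definition dual_act (a f : 'rV[R]_n) : 'rV[R]_n :=
  \row_j \sum_(i < n) f 0 i * (Amul (Abasis j) a) 0 i.

(* right A^* -comodules: rho m = sum_i (rho m i) (x) e_i^*  (e^* dual basis) *)
Definition is_comodule (M : lmodType R) (rho : M -> 'I_n -> M) : Prop :=
  [/\ (forall (r : R) (x y : M) i, rho (r *: x + y) i = r *: rho x i + rho y i),
      (* (rho (x) 1) rho = (1 (x) Delta_{A^*}) rho *)
      (forall x i j, rho (rho x j) i = \sum_(k < n) hmul H i j k *: rho x k) &
      (* (1 (x) eps_{A^*}) rho = id *)
      (forall x, \sum_(i < n) hunit H i *: rho x i = x)].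

Definition comod_hom (M N : lmodType R) (rhoM : M -> 'I_n -> M)
    (rhoN : N -> 'I_n -> N) (f : M -> N) : Prop :=
  (forall (r : R) x y, f (r *: x + y) = r *: f x + f y) /\
  (forall x i, rhoN (f x) i = f (rhoM x i)).

Definition injective_comodule (M : lmodType R) (rhoM : M -> 'I_n -> M) : Prop :=
  forall (N P : lmodType R) (rhoN : N -> 'I_n -> N) (rhoP : P -> 'I_n -> P)
         (i : N -> P) (f : N -> M),
    is_comodule rhoN -> is_comodule rhoP ->
    comod_hom rhoN rhoP i -> injective i -> comod_hom rhoN rhoM f ->
    exists h : P -> M, comod_hom rhoP rhoM h /\ (forall x, h (i x) = f x).

Section ModAlg.
Variables (m : nat) (S : modalg_consts R n m).

Definition Smul (s t : 'rV[R]_m) : 'rV[R]_m :=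
  \row_k \sum_(i < m) \sum_(j < m) s 0 i * t 0 j * smul S i j k.
Definition Sone : 'rV[R]_m := \row_k sunit S k.
Definition Aact (a : 'rV[R]_n) (s : 'rV[R]_m) : 'rV[R]_m :=
  \row_k \sum_(i < n) \sum_(j < m) a 0 i * s 0 j * sact S i j k.

Definition is_module_algebra : Prop :=
  [/\ (forall s t u, Smul (Smul s t) u = Smul s (Smul t u)) /\
      (forall s, Smul Sone s = s /\ Smul s Sone = s),
      (forall a b s, Aact (Amul a b) s = Aact a (Aact b s)),
      (forall s, Aact Aone s = s),
      (forall a s t, Aact a (Smul s t) =
         \sum_(i < n) \sum_(j < n) Acomul a i j *: Smul (Aact (Abasis i) s) (Aact (Abasis j) t)) &
      (forall a, Aact a Sone = Acounit a *: Sone)].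

Definition faithful_action : Prop :=
  forall a, (forall s, Aact a s = 0) -> a = 0.

Definition invariants_eq_R : Prop :=
  forall s, (forall a, Aact a s = Acounit a *: s) <-> exists r : R, s = r *: Sone.

Definition IS_eq_R : Prop :=
  forall x : 'rV[R]_m,
    (exists (k : nat) (l : 'I_k -> 'rV[R]_n) (s : 'I_k -> 'rV[R]_m),
        (forall i, left_integral (l i)) /\ x = \sum_(i < k) Aact (l i) (s i))
    <-> exists r : R, x = r *: Sone.

Definition tame : Prop :=
  [/\ is_module_algebra, m = n, invariants_eq_R, faithful_action & IS_eq_R].

Definition dual_module_hom (g : 'rV[R]_n -> 'rV[R]_m) : Prop :=
  (forall (r : R) f f', g (r *: f + f') = r *: g f + g f') /\
  (forall a f, g (dual_act a f) = Aact a (g f)).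

(* right relative (S, A^* )-Hopf modules; the right A^* -comodule algebra
   structure of S is rho_S(s) = sum_j (e_j . s) (x) e_j^*, and
   e_i^* e_j^* = sum_k hcomul k i j e_k^* in A^* *)
Definition rel_hopf_module (M : lmodType R) (sa : M -> 'rV[R]_m -> M)
    (rho : M -> 'I_n -> M) : Prop :=
  [/\ is_comodule rho /\
      (forall (r : R) x y s, sa (r *: x + y) s = r *: sa x s + sa y s),
      (forall (r : R) x s t, sa x (r *: s + t) = r *: sa x s + sa x t),
      (forall x s t, sa (sa x s) t = sa x (Smul s t)),
      (forall x, sa x Sone = x) &
      (forall x s k, rho (sa x s) k =
         \sum_(i < n) \sum_(j < n) hcomul H k i j *: sa (rho x i) (Aact (Abasis j) s))].

End ModAlg.
End Hopf.

From HB Require Import structures.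
From mathcomp Require Import all_boot all_order all_algebra ring.
From mathcomp Require classical_sets boolp.
From Stdlib Require Import Setoid Morphisms.
Set Implicit Arguments. Unset Strict Implicit. Unset Printing Implicit Defensive.
Import GRing.Theory.
Local Open Scope ring_scope.

(* If IS = R, write 1 = sum_t L_t s_t with left integrals L_t.  A left integral
   L satisfies a L_(1) (x) S(L_(2)) = L_(1) (x) S(L_(2)) a, so
   g f = sum_t L_t(1) f(S(L_t(2))) . s_t is A-linear, and g eps = 1.
   Conversely, there are left integrals lam_j with
   sum_j lam_j . S^*(e_j^* ) = eps in A^*, whence
   1 = g eps = sum_j lam_j . g(S^*(e_j^* )) lies in IS; and IS lies in S^A = R.

   Over a field, given comodule maps i : N -> P (injective) and f : N -> M,
   extend f linearly along i (Zorn) to r : P -> M; Doi's averaging of r by g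
   is then a comodule map, and it still extends f because g eps = 1. *)

(* Lets setoid_rewrite work under the binders of big operators. *)
#[export] Instance bigop_proper (R I : Type) (idx : R) (r : seq I) :
  Proper (pointwise_relation I eq ==> eq) (@bigop R I idx r).
Proof. move=> f g fg; rewrite unlock /reducebig; elim: r => //= x r ->; by rewrite fg. Qed.

Ltac pull_sums := repeat (setoid_rewrite big_distrl || setoid_rewrite big_distrr); simpl.

Lemma exchange_sum (V : nmodType) (I J : finType) (F : I -> J -> V) :
  \sum_i \sum_j F i j = \sum_j \sum_i F i j.
Proof. exact: exchange_big. Qed.

(* [sum_to_front k] moves the k-th (from 0) nested summation on the left-hand
   side of an equation to the outermost position. *)
Ltac sum_to_front k := lazymatch k with
  | O => idtac
  | S O => rewrite exchange_sum
  | S ?k' => under eq_bigr => ? _ do sum_to_front k'; rewrite exchange_sum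
  end.

Ltac peel_sum k := lazymatch goal with |- _ = ?B =>
  let H := fresh "rhs" in set H := B; sum_to_front k; rewrite {}/H end;
  apply: eq_bigr => ? _.

(* [align_sums [:: k1; k2; ...]] matches the nested summations of the two sides
   of an equation, the outermost sum on the right being the k1-th on the left,
   and so on; what remains are equations between summands. *)
Ltac align_sums l := lazymatch l with
  | nil => idtac
  | cons ?k ?l' => peel_sum k; align_sums l'
  end.

(* [sum_ring] distributes products over sums, then matches up the nested sums
   of both sides in every possible order until [ring] closes the summands. *)
Ltac search_sums := first [ ring
  | peel_sum 0%N; search_sums | peel_sum 1%N; search_sums | peel_sum 2%N; search_sums
  | peel_sum 3%N; search_sums | peel_sum 4%N; search_sums | peel_sum 5%N; search_sums
  | peel_sum 6%N; search_sums ].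

Ltac sum_ring := pull_sums; search_sums.

Lemma sum_delta (R : pzSemiRingType) (I : finType) (a : I) (F : I -> R) :
  \sum_i (a == i)%:R * F i = F a.
Proof.
rewrite (bigD1 a) //= eqxx mul1r big1 ?addr0 // => i /negbTE.
by rewrite eq_sym => ->; rewrite mul0r.
Qed.

Lemma sum_delta' (R : pzSemiRingType) (I : finType) (a : I) (F : I -> R) :
  \sum_i (i == a)%:R * F i = F a.
Proof. rewrite -(sum_delta a); apply: eq_bigr => i _; by rewrite eq_sym. Qed.

Lemma sum_delta_r (R : comPzSemiRingType) (I : finType) (a : I) (F : I -> R) :
  \sum_i F i * (a == i)%:R = F a.
Proof. rewrite -(sum_delta a); apply: eq_bigr => i _; by rewrite mulrC. Qed.

Lemma sum_delta_r' (R : comPzSemiRingType) (I : finType) (a : I) (F : I -> R) :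
  \sum_i F i * (i == a)%:R = F a.
Proof. rewrite -(sum_delta' a); apply: eq_bigr => i _; by rewrite mulrC. Qed.

Lemma sum_pair (V : nmodType) (I J : finType) (F : I * J -> V) :
  \sum_p F p = \sum_i \sum_j F (i, j).
Proof. by rewrite pair_big; apply: eq_bigr => -[]. Qed.

(* The axioms of a Hopf algebra with basis indexed by [I], in structure
   constants: e_i e_j = sum_k mu i j k e_k, 1 = sum_k u k e_k,
   Delta e_c = sum_(x, y) de c x y e_x (x) e_y, eps e_c = ep c and
   S e_i = sum_j si i j e_j. *)
Record hopf_coords (R : comPzRingType) (I : finType) (mu : I -> I -> I -> R)
  (u : I -> R) (de : I -> I -> I -> R) (ep : I -> R) (si : I -> I -> R) : Prop := {
 hc_mulA : forall i j k q, \sum_p mu i j p * mu p k q = \sum_p mu j k p * mu i p q;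
 hc_mul1l : forall j k, \sum_i u i * mu i j k = (j == k)%:R;
 hc_mul1r : forall i k, \sum_j u j * mu i j k = (i == k)%:R;
 hc_comulA : forall c x y z, \sum_k de c k z * de k x y = \sum_k de c x k * de k y z;
 hc_counitl : forall c y, \sum_x de c x y * ep x = (c == y)%:R;
 hc_counitr : forall c x, \sum_y de c x y * ep y = (c == x)%:R;
 hc_comulM : forall a b p q, \sum_k mu a b k * de k p q =
     \sum_i \sum_j \sum_k \sum_l de a i j * de b k l * mu i k p * mu j l q;
 hc_comul1 : forall i j, \sum_k u k * de k i j = u i * u j;
 hc_counitM : forall a b, \sum_k mu a b k * ep k = ep a * ep b;
 hc_counit1 : \sum_k u k * ep k = 1;
 hc_antipodel : forall a q, \sum_i \sum_j de a i j * \sum_p si i p * mu p j q = ep a * u q;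
 hc_antipoder : forall a q, \sum_i \sum_j de a i j * \sum_p si j p * mu i p q = ep a * u q }.

Section DualHopf.
Variables (R : comPzRingType) (I : finType) (mu : I -> I -> I -> R)
  (u : I -> R) (de : I -> I -> I -> R) (ep : I -> R) (si : I -> I -> R).

Lemma hopf_coords_dual : hopf_coords mu u de ep si ->
  hopf_coords (fun i j k => de k i j) ep (fun k i j => mu i j k) u (fun i j => si j i).
Proof.
case=> asc ul ur ca cl cr cm c1 em e1 sl sr; split.
- move=> i j k q; rewrite (eq_bigr (fun p => de q p k * de p i j)); last by move=> ? _; ring.
  rewrite ca; apply: eq_bigr => ? _; ring.
- move=> j k; rewrite eq_sym -cl; apply: eq_bigr => ? _; ring.
- move=> j k; rewrite eq_sym -cr; apply: eq_bigr => ? _; ring.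
- move=> c x y z; rewrite (eq_bigr (fun k => mu x y k * mu k z c)); last by move=> ? _; ring.
  rewrite asc; apply: eq_bigr => ? _; ring.
- move=> c y; rewrite eq_sym -ul; apply: eq_bigr => ? _; ring.
- move=> c x; rewrite eq_sym -ur; apply: eq_bigr => ? _; ring.
- move=> a b p q; rewrite (_ : \sum_k de k a b * mu p q k = \sum_k mu p q k * de k a b);
    last by apply: eq_bigr => ? _; ring.
  rewrite cm; align_sums [:: 0; 1; 0; 0]%N; ring.
- move=> i j; rewrite -em; apply: eq_bigr => ? _; ring.
- move=> a b; rewrite -c1; apply: eq_bigr => ? _; ring.
- rewrite -e1; apply: eq_bigr => ? _; ring.
- move=> a q; rewrite mulrC -sl; pull_sums; align_sums [:: 2; 1; 0]%N; ring.
- move=> a q; rewrite mulrC -sr; pull_sums; align_sums [:: 0; 1; 0]%N; ring.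
Qed.

End DualHopf.

(* Convolution of matrices F : I -> J -> R, i.e. of linear maps from the
   coalgebra (de, ep) to the algebra (mu, u). *)
Section Convolution.
Variables (R : comPzRingType) (I J : finType) (de : I -> I -> I -> R) (ep : I -> R)
  (mu : J -> J -> J -> R) (u : J -> R).
Hypothesis comulA : forall c x y z, \sum_k de c k z * de k x y = \sum_k de c x k * de k y z.
Hypothesis counitl : forall c y, \sum_x de c x y * ep x = (c == y)%:R.
Hypothesis counitr : forall c x, \sum_y de c x y * ep y = (c == x)%:R.
Hypothesis mulA : forall i j k q, \sum_p mu i j p * mu p k q = \sum_p mu j k p * mu i p q.
Hypothesis mul1l : forall j k, \sum_i u i * mu i j k = (j == k)%:R.
Hypothesis mul1r : forall i k, \sum_j u j * mu i j k = (i == k)%:R.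

Definition conv (F G : I -> J -> R) c q :=
  \sum_x \sum_y de c x y * \sum_a \sum_b F x a * G y b * mu a b q.
Definition conv1 c q := ep c * u q.

Lemma convA F G K c q : conv (conv F G) K c q = conv F (conv G K) c q.
Proof.
rewrite /conv.
transitivity (\sum_x' \sum_y' \sum_z \sum_a' \sum_b' \sum_b
   (\sum_x de c x z * de x x' y') * (F x' a' * G y' b' * K z b) * (\sum_a mu a' b' a * mu a b q)).
  pull_sums; align_sums [:: 4; 4; 1; 3; 3; 2; 0; 0]%N; ring.
transitivity (\sum_x' \sum_y' \sum_z \sum_a' \sum_b' \sum_b
   (\sum_x de c x' x * de x y' z) * (F x' a' * G y' b' * K z b) * (\sum_a mu b' b a * mu a' a q)).
  do 6 (apply: eq_bigr => ? _); by rewrite comulA mulA.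
pull_sums; align_sums [:: 0; 5; 2; 4; 0; 0; 0; 0]%N; ring.
Qed.

Lemma conv1F F c q : conv conv1 F c q = F c q.
Proof.
rewrite /conv /conv1.
transitivity (\sum_y (\sum_x de c x y * ep x) * \sum_b F y b * \sum_a u a * mu a b q).
  by sum_ring.
setoid_rewrite counitl; setoid_rewrite mul1l.
rewrite sum_delta; under eq_bigr do rewrite mulrC; exact: sum_delta'.
Qed.

Lemma convF1 F c q : conv F conv1 c q = F c q.
Proof.
rewrite /conv /conv1.
transitivity (\sum_x (\sum_y de c x y * ep y) * \sum_a F x a * \sum_b u b * mu a b q).
  by sum_ring.
setoid_rewrite counitr; setoid_rewrite mul1r.
rewrite sum_delta; under eq_bigr do rewrite mulrC; exact: sum_delta'.
Qed.

Lemma eq_conv F F' G G' c q : (forall x a, F x a = F' x a) -> (forall x a, G x a = G' x a) ->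
  conv F G c q = conv F' G' c q.
Proof.
move=> eF eG; rewrite /conv; apply: eq_bigr => x _; apply: eq_bigr => y _.
congr (_ * _); apply: eq_bigr => a _; apply: eq_bigr => b _; by rewrite eF eG.
Qed.

Lemma conv_inv_unique L F K : (forall c q, conv L F c q = conv1 c q) ->
  (forall c q, conv F K c q = conv1 c q) -> forall c q, L c q = K c q.
Proof.
move=> LF FK c q.
rewrite -convF1 -(conv1F K) (@eq_conv L L conv1 (conv F K)) //.
by rewrite -convA; apply: eq_conv.
Qed.

End Convolution.

Section Antipode.
Variables (R : comPzRingType) (I : finType) (mu : I -> I -> I -> R)
  (u : I -> R) (de : I -> I -> I -> R) (ep : I -> R) (si : I -> I -> R).
Hypothesis hA : hopf_coords mu u de ep si.

Lemma counit_antipode i : \sum_p si i p * ep p = ep i.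
Proof.
symmetry.
transitivity (\sum_q (ep i * u q) * ep q).
  by rewrite -{1}(mulr1 (ep i)) -(hc_counit1 hA) big_distrr /=; apply: eq_bigr => ? _; ring.
transitivity (\sum_q (\sum_x \sum_y de i x y * \sum_p si x p * mu p y q) * ep q).
  by setoid_rewrite (hc_antipodel hA).
transitivity (\sum_x \sum_y \sum_p de i x y * si x p * (\sum_q mu p y q * ep q)).
  by sum_ring.
setoid_rewrite (hc_counitM hA).
transitivity (\sum_x (\sum_y de i x y * ep y) * (\sum_p si x p * ep p)); first by sum_ring.
setoid_rewrite (hc_counitr hA); exact: sum_delta.
Qed.

(* S(ab) = S(b) S(a): both sides are convolution inverses of the
   multiplication of A, seen as a linear map from the coalgebra A (x) A. *)
Let de2 (c x y : I * I) := de c.1 x.1 y.1 * de c.2 x.2 y.2.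
Let ep2 (c : I * I) := ep c.1 * ep c.2.
Let mul_rev_antipode (c : I * I) q := \sum_p \sum_r si c.2 p * si c.1 r * mu p r q.
Let mul_coords (c : I * I) q := mu c.1 c.2 q.
Let antipode_mul (c : I * I) q := \sum_k mu c.1 c.2 k * si k q.

Lemma mul_rev_antipode_conv_mul c q :
  conv de2 mu mul_rev_antipode mul_coords c q = conv1 ep2 u c q.
Proof.
case: c => a b; rewrite /conv /conv1 /de2 /ep2 /mul_rev_antipode /mul_coords /=.
rewrite sum_pair; under eq_bigr => ? _ do under eq_bigr => ? _ do rewrite sum_pair; simpl.
transitivity (\sum_a1 \sum_a2 \sum_b1 \sum_b2 de a a1 a2 * de b b1 b2 * \sum_p \sum_r \sum_be
   si b1 p * si a1 r * mu a2 b2 be * (\sum_al mu p r al * mu al be q)).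
  pull_sums; align_sums [:: 0;1;0;0;2;2;1;0]%N; ring.
setoid_rewrite (hc_mulA hA).
transitivity (\sum_a1 \sum_a2 \sum_b1 \sum_b2 de a a1 a2 * de b b1 b2 * \sum_p \sum_r \sum_al
   si b1 p * si a1 r * mu p al q * (\sum_be mu a2 b2 be * mu r be al)).
  pull_sums; align_sums [:: 0;0;0;0;0;0;1;0]%N; ring.
setoid_rewrite <- (hc_mulA hA).
transitivity (\sum_b1 \sum_b2 de b b1 b2 * \sum_p si b1 p * \sum_al mu p al q *
   \sum_be (\sum_a1 \sum_a2 de a a1 a2 * \sum_r si a1 r * mu r a2 be) * mu be b2 al).
  pull_sums; align_sums [:: 2;2;2;3;3;0;0;0]%N; ring.
setoid_rewrite (hc_antipodel hA).
transitivity (ep a * \sum_b1 \sum_b2 de b b1 b2 * \sum_p si b1 p * \sum_al mu p al q *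
   (\sum_be u be * mu be b2 al)).
  by sum_ring.
setoid_rewrite (hc_mul1l hA); setoid_rewrite sum_delta_r.
by rewrite (hc_antipodel hA) mulrA.
Qed.

Lemma mul_conv_antipode_mul c q :
  conv de2 mu mul_coords antipode_mul c q = conv1 ep2 u c q.
Proof.
case: c => a b; rewrite /conv /conv1 /de2 /ep2 /antipode_mul /mul_coords /=.
rewrite sum_pair; under eq_bigr => ? _ do under eq_bigr => ? _ do rewrite sum_pair; simpl.
transitivity (\sum_al \sum_k (\sum_i \sum_j \sum_k' \sum_l de a i j * de b k' l * mu i k' al * mu j l k)
   * \sum_be si k be * mu al be q).
  pull_sums; align_sums [:: 4;5;0;1;0;0;0]%N; ring.
setoid_rewrite <- (hc_comulM hA).
transitivity (\sum_w mu a b w * \sum_al \sum_k de w al k * \sum_be si k be * mu al be q).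
  pull_sums; align_sums [:: 2;0;0;0]%N; ring.
setoid_rewrite (hc_antipoder hA).
under eq_bigr do rewrite mulrA.
by rewrite -big_distrl /= (hc_counitM hA).
Qed.

Lemma antipode_antimul a b q :
  \sum_k mu a b k * si k q = \sum_p \sum_r si b p * si a r * mu p r q.
Proof.
have de2A c x y z : \sum_k de2 c k z * de2 k x y = \sum_k de2 c x k * de2 k y z.
  case: c x y z => [c1 c2] [x1 x2] [y1 y2] [z1 z2]; rewrite /de2 /= !sum_pair /=.
  transitivity ((\sum_k1 de c1 k1 z1 * de k1 x1 y1) * (\sum_k2 de c2 k2 z2 * de k2 x2 y2)).
    by sum_ring.
  rewrite !(hc_comulA hA); sum_ring.
have de2_counitl c y : \sum_x de2 c x y * ep2 x = (c == y)%:R.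
  case: c y => [c1 c2] [y1 y2]; rewrite /de2 /ep2 /= sum_pair /=.
  transitivity ((\sum_x1 de c1 x1 y1 * ep x1) * (\sum_x2 de c2 x2 y2 * ep x2)); first by sum_ring.
  by rewrite !(hc_counitl hA) xpair_eqE; case: (c1 == y1); case: (c2 == y2);
    rewrite ?mulr0 ?mulr1.
have de2_counitr c x : \sum_y de2 c x y * ep2 y = (c == x)%:R.
  case: c x => [c1 c2] [y1 y2]; rewrite /de2 /ep2 /= sum_pair /=.
  transitivity ((\sum_x1 de c1 y1 x1 * ep x1) * (\sum_x2 de c2 y2 x2 * ep x2)); first by sum_ring.
  by rewrite !(hc_counitr hA) xpair_eqE; case: (c1 == y1); case: (c2 == y2);
    rewrite ?mulr0 ?mulr1.
symmetry; apply: (conv_inv_unique de2A de2_counitl de2_counitr (hc_mulA hA) (hc_mul1l hA)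
  (hc_mul1r hA) mul_rev_antipode_conv_mul mul_conv_antipode_mul (a, b) q).
Qed.

End Antipode.

Section HopfIdentities.
Variables (R : comPzRingType) (I : finType) (mu : I -> I -> I -> R)
  (u : I -> R) (de : I -> I -> I -> R) (ep : I -> R) (si : I -> I -> R).
Hypothesis hA : hopf_coords mu u de ep si.

(* [alpha c a s] is the coefficient of e_a (x) e_s in c_(1) (x) S(c_(2)). *)
Local Notation alpha c a s := (\sum_b de c a b * si b s).

Lemma antipode_anticomul a b q : \sum_k de k a b * si q k = \sum_p \sum_r si p b * si r a * de q p r.
Proof. exact: (antipode_antimul (hopf_coords_dual hA)). Qed.

Lemma comul_antipode_rev c s t r :
  \sum_a alpha c a s * alpha a r t
  = \sum_q de q s t * alpha c r q.
Proof.
transitivity (\sum_b \sum_b' (\sum_a de c a b * de a r b') * si b s * si b' t); first by sum_ring.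
setoid_rewrite (hc_comulA hA).
transitivity (\sum_k de c r k * (\sum_b' \sum_b si b' t * si b s * de k b' b)); first by sum_ring.
setoid_rewrite <- antipode_anticomul; sum_ring.
Qed.

Lemma mul_comul_antipode x t z q :
  \sum_a alpha x a t * mu z a q =
  \sum_z1 \sum_z2 de z z1 z2 * \sum_w mu z1 x w * \sum_t' mu t' z2 t * alpha w q t'.
Proof.
symmetry.
transitivity (\sum_z1 \sum_z2 \sum_t' \sum_b de z z1 z2 * mu t' z2 t * si b t' *
   (\sum_w mu z1 x w * de w q b)).
  pull_sums; align_sums [:: 0;0;1;1;0]%N; ring.
setoid_rewrite (hc_comulM hA).
transitivity (\sum_z1 \sum_z2 \sum_t' \sum_i \sum_j \sum_k \sum_l
  de z z1 z2 * de z1 i j * de x k l * mu i k q * mu t' z2 t * (\sum_b mu j l b * si b t')).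
  pull_sums; align_sums [:: 0;0;0;1;1;1;1;0]%N; ring.
setoid_rewrite (antipode_antimul hA).
transitivity (\sum_z1 \sum_z2 \sum_i \sum_j \sum_k \sum_l \sum_p \sum_r
  de z z1 z2 * de z1 i j * de x k l * mu i k q * si l p * si j r * (\sum_t' mu p r t' * mu t' z2 t)).
  pull_sums; align_sums [:: 0;0;1;1;1;1;1;1;0]%N; ring.
setoid_rewrite (hc_mulA hA).
transitivity (\sum_z2 \sum_i \sum_j \sum_k \sum_l \sum_p \sum_r \sum_t'
  (\sum_z1 de z z1 z2 * de z1 i j) * de x k l * mu i k q * si l p * si j r * mu r z2 t' * mu p t' t).
  pull_sums; align_sums [:: 1;1;1;1;1;1;1;1;0]%N; ring.
setoid_rewrite (hc_comulA hA).
transitivity (\sum_i \sum_k \sum_l \sum_p \sum_t' de x k l * mu i k q * si l p * mu p t' t *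
  \sum_v de z i v * (\sum_j \sum_z2 de v j z2 * \sum_r si j r * mu r z2 t')).
  pull_sums; align_sums [:: 1;2;2;2;3;3;1;0;0]%N; ring.
setoid_rewrite (hc_antipodel hA).
transitivity (\sum_k \sum_l de x k l * (\sum_i (\sum_v de z i v * ep v) * mu i k q) *
   (\sum_p (\sum_t' u t' * mu p t' t) * si l p)).
  pull_sums; align_sums [:: 1;1;1;1;0;0]%N; ring.
setoid_rewrite (hc_counitr hA); setoid_rewrite (hc_mul1r hA).
setoid_rewrite sum_delta; setoid_rewrite sum_delta'.
sum_ring.
Qed.

Lemma counit_comul_antipode a j : \sum_r alpha a r j * ep r = si a j.
Proof.
transitivity (\sum_b (\sum_r de a r b * ep r) * si b j); first by sum_ring.
setoid_rewrite (hc_counitl hA); exact: sum_delta.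
Qed.

(* lam j = sum_y b_(1) <e_y^*, S(b_(2))> with b = S(e_y) e_j. *)
Definition lam j a := \sum_i \sum_x \sum_y mu i j x * si y i * alpha x a y.

Lemma lam_left_integral j z q : \sum_a lam j a * mu z a q = ep z * lam j q.
Proof.
rewrite /lam.
transitivity (\sum_i \sum_x \sum_y mu i j x * si y i * (\sum_a alpha x a y * mu z a q)).
  pull_sums; align_sums [:: 1;1;1;0;0]%N; ring.
setoid_rewrite mul_comul_antipode.
transitivity (\sum_i \sum_y \sum_z1 \sum_z2 \sum_w \sum_t' mu t' z2 y * si y i * de z z1 z2 *
   alpha w q t' * (\sum_x mu i j x * mu z1 x w)).
  pull_sums; align_sums [:: 0;1;1;1;1;1;0;0]%N; ring.
setoid_rewrite <- (hc_mulA hA).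
transitivity (\sum_z1 \sum_z2 \sum_w \sum_t' \sum_p de z z1 z2 * mu p j w * alpha w q t' *
   \sum_i mu z1 i p * (\sum_y mu t' z2 y * si y i)).
  pull_sums; align_sums [:: 2;2;2;2;2;0;1;0]%N; ring.
setoid_rewrite (antipode_antimul hA).
transitivity (\sum_z1 \sum_z2 \sum_w \sum_t' \sum_p \sum_p' \sum_r' de z z1 z2 * mu p j w *
   alpha w q t' * si z2 p' * si t' r' * (\sum_i mu p' r' i * mu z1 i p)).
  pull_sums; align_sums [:: 0;0;0;0;0;2;2;0;0]%N; ring.
setoid_rewrite <- (hc_mulA hA).
transitivity (\sum_w \sum_t' \sum_p \sum_r' \sum_i mu p j w * alpha w q t' * si t' r' *
   mu i r' p * (\sum_z1 \sum_z2 de z z1 z2 * \sum_p' si z2 p' * mu z1 p' i)).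
  pull_sums; align_sums [:: 2;2;2;3;3;0;0;1;0]%N; ring.
setoid_rewrite (hc_antipoder hA).
transitivity (ep z * \sum_w \sum_t' \sum_p \sum_r' mu p j w * alpha w q t' * si t' r' *
   (\sum_i u i * mu i r' p)).
  pull_sums; align_sums [:: 0;0;0;0;0;0]%N; ring.
setoid_rewrite (hc_mul1l hA); setoid_rewrite sum_delta_r'.
congr (_ * _). pull_sums; align_sums [:: 2;0;0;0]%N; ring.
Qed.

Lemma lam_antipode_trace : \sum_j \sum_a lam j a * si a j = 1.
Proof.
rewrite /lam.
transitivity (\sum_j \sum_a (\sum_i \sum_x \sum_y mu i j x * si y i * \sum_b de x a b * si b y) *
   \sum_r alpha a r j * ep r).
  by setoid_rewrite counit_comul_antipode.
transitivity (\sum_j \sum_i \sum_x \sum_y \sum_r mu i j x * si y i * ep r *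
   (\sum_a alpha x a y * alpha a r j)).
  pull_sums; align_sums [:: 0;1;1;1;1;0;1;0]%N; ring.
setoid_rewrite comul_antipode_rev.
transitivity (\sum_x \sum_q \sum_r alpha x r q * ep r *
   (\sum_i \sum_j de q i j * \sum_p si i p * mu p j x)).
  pull_sums; align_sums [:: 2;4;3;3;2;0;0]%N; ring.
setoid_rewrite (hc_antipodel hA).
transitivity (\sum_x u x * \sum_q ep q * (\sum_r alpha x r q * ep r)); first by sum_ring.
setoid_rewrite counit_comul_antipode.
transitivity (\sum_x u x * \sum_q si x q * ep q); first by sum_ring.
setoid_rewrite (counit_antipode hA); rewrite -(hc_counit1 hA); sum_ring.
Qed.

Lemma integral_comul_antipode (L : I -> R) (hL : forall y c, \sum_z L z * mu y z c = ep y * L c) x k i :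
  \sum_j \sum_p (\sum_a L a * de a k j) * si j p * mu p x i =
  \sum_i' \sum_j mu x i' k * (\sum_a L a * de a i' j) * si j i.
Proof.
transitivity (\sum_x2 \sum_j \sum_p (\sum_x1 de x x1 x2 * ep x1) * (\sum_a L a * de a k j) * si j p * mu p x2 i).
  setoid_rewrite (hc_counitl hA).
  transitivity (\sum_x2 (x == x2)%:R * \sum_j \sum_p (\sum_a L a * de a k j) * si j p * mu p x2 i).
    by rewrite sum_delta.
  by sum_ring.
transitivity (\sum_x1 \sum_x2 \sum_j \sum_p de x x1 x2 * si j p * mu p x2 i * (\sum_a (ep x1 * L a) * de a k j)).
  pull_sums; align_sums [:: 3;0;0;0;0]%N; ring.
setoid_rewrite <- hL.
transitivity (\sum_x1 \sum_x2 \sum_j \sum_p \sum_z de x x1 x2 * si j p * mu p x2 i * L z * (\sum_a mu x1 z a * de a k j)).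
  pull_sums; align_sums [:: 0;0;0;0;1;0]%N; ring.
setoid_rewrite (hc_comulM hA).
transitivity (\sum_x1 \sum_x2 \sum_p \sum_z \sum_i1 \sum_j1 \sum_k1 \sum_l1 de x x1 x2 * mu p x2 i * L z *
   de x1 i1 j1 * de z k1 l1 * mu i1 k1 k * (\sum_j mu j1 l1 j * si j p)).
  pull_sums; align_sums [:: 0;0;1;1;1;1;1;1;0]%N; ring.
setoid_rewrite (antipode_antimul hA).
transitivity (\sum_x1 \sum_x2 \sum_z \sum_i1 \sum_j1 \sum_k1 \sum_l1 \sum_p' \sum_r'
   de x x1 x2 * L z * de x1 i1 j1 * de z k1 l1 * mu i1 k1 k * si l1 p' * si j1 r' *
   (\sum_p mu p' r' p * mu p x2 i)).
  pull_sums; align_sums [:: 0;0;1;1;1;1;1;1;1;0]%N; ring.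
setoid_rewrite (hc_mulA hA).
transitivity (\sum_x2 \sum_z \sum_i1 \sum_j1 \sum_k1 \sum_l1 \sum_p' \sum_r' \sum_p
   (\sum_x1 de x x1 x2 * de x1 i1 j1) * L z * de z k1 l1 * mu i1 k1 k * si l1 p' * si j1 r' *
   mu r' x2 p * mu p' p i).
  pull_sums; align_sums [:: 1;1;1;1;1;1;1;1;1;0]%N; ring.
setoid_rewrite (hc_comulA hA).
transitivity (\sum_z \sum_i1 \sum_k1 \sum_l1 \sum_p' \sum_p L z * de z k1 l1 * mu i1 k1 k * si l1 p' *
   mu p' p i * \sum_v de x i1 v * (\sum_j1 \sum_x2 de v j1 x2 * \sum_r' si j1 r' * mu r' x2 p)).
  pull_sums; align_sums [:: 1;1;2;2;2;3;3;1;0;0]%N; ring.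
setoid_rewrite (hc_antipodel hA).
transitivity (\sum_z \sum_k1 \sum_l1 L z * de z k1 l1 * (\sum_i1 (\sum_v de x i1 v * ep v) * mu i1 k1 k) *
   (\sum_p' si l1 p' * (\sum_p u p * mu p' p i))).
  pull_sums; align_sums [:: 0;1;1;1;0;0;0]%N; ring.
setoid_rewrite (hc_counitr hA); setoid_rewrite (hc_mul1r hA).
setoid_rewrite sum_delta; setoid_rewrite sum_delta_r'.
pull_sums; align_sums [:: 1;1;0]%N; ring.
Qed.

Lemma antipode_dual_mul_equivariance t k v q :
  \sum_k' \sum_a \sum_b de t a b * mu a k' k * (\sum_i (\sum_p si p k' * de i p v) * mu q b i)
  = \sum_j mu j t v * \sum_p si p k * de q p j.
Proof.
transitivity (\sum_a \sum_b \sum_k' \sum_p de t a b * mu a k' k * si p k' * (\sum_i mu q b i * de i p v)).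
  by sum_ring.
setoid_rewrite (hc_comulM hA).
transitivity (\sum_a \sum_k' \sum_q1 \sum_q2 \sum_b1 \sum_b2 de q q1 q2 * mu a k' k * mu q2 b2 v *
   (\sum_b de t a b * de b b1 b2) * (\sum_p mu q1 b1 p * si p k')).
  pull_sums; align_sums [:: 0;1;2;2;2;2;1;0]%N; ring.
setoid_rewrite <- (hc_comulA hA); setoid_rewrite (antipode_antimul hA).
transitivity (\sum_a \sum_q1 \sum_q2 \sum_b1 \sum_b2 \sum_w \sum_p' \sum_r' de q q1 q2 * mu q2 b2 v *
   de t w b2 * de w a b1 * si b1 p' * si q1 r' * (\sum_k' mu p' r' k' * mu a k' k)).
  pull_sums; align_sums [:: 0;1;1;1;1;3;1;1;0]%N; ring.
setoid_rewrite <- (hc_mulA hA).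
transitivity (\sum_q1 \sum_q2 \sum_b2 \sum_w \sum_r' \sum_p de q q1 q2 * mu q2 b2 v * de t w b2 *
   si q1 r' * mu p r' k * (\sum_a \sum_b1 de w a b1 * \sum_p' si b1 p' * mu a p' p)).
  pull_sums; align_sums [:: 1;1;2;2;3;3;0;0;0]%N; ring.
setoid_rewrite (hc_antipoder hA).
transitivity (\sum_q1 \sum_q2 \sum_b2 \sum_r' de q q1 q2 * mu q2 b2 v * si q1 r' *
   (\sum_w de t w b2 * ep w) * (\sum_p u p * mu p r' k)).
  pull_sums; align_sums [:: 0;0;0;1;1;0]%N; ring.
setoid_rewrite (hc_counitl hA); setoid_rewrite (hc_mul1l hA).
transitivity (\sum_q1 \sum_q2 de q q1 q2 * (\sum_b2 (t == b2)%:R * mu q2 b2 v) *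
   (\sum_r' (r' == k)%:R * si q1 r')); first by sum_ring.
rewrite (eq_bigr (fun q1 => \sum_q2 de q q1 q2 * mu q2 t v * si q1 k)); last first.
  by move=> q1 _; apply: eq_bigr => q2 _; rewrite sum_delta sum_delta'.
sum_ring.
Qed.

End HopfIdentities.

Section LinearMaps.
Variables (R : pzRingType) (U V : lmodType R) (f : U -> V).
Hypothesis f_lin : linear f.

Let fL : {linear U -> V} := HB.pack f (GRing.isLinear.Build _ _ _ _ f f_lin).

Lemma lin0 : f 0 = 0.
Proof. exact: (raddf0 fL). Qed.

Lemma linZ a x : f (a *: x) = a *: f x.
Proof. exact: (linearZZ fL). Qed.

Lemma lin_sum (I : Type) (r : seq I) (P : pred I) (F : I -> U) :
  f (\sum_(i <- r | P i) F i) = \sum_(i <- r | P i) f (F i).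
Proof. exact: (raddf_sum fL). Qed.

Lemma lin_sumZ (I : finType) (c : I -> R) (F : I -> U) :
  f (\sum_i c i *: F i) = \sum_i c i *: f (F i).
Proof. by rewrite lin_sum; apply: eq_bigr => i _; rewrite linZ. Qed.

End LinearMaps.

Section LinearExtension.
Import classical_sets.
Local Open Scope classical_set_scope.
Variables (R : unitRingType) (N P M : lmodType R).
Hypothesis unitR : forall x : R, x != 0 -> x \is a GRing.unit.
Variables (i : N -> P) (f : N -> M).
Hypotheses (i_lin : linear i) (i_inj : injective i) (f_lin : linear f).

(* Graphs of linear maps defined on a subspace of P and extending f along i. *)
Definition partial_extension (G : set (P * M)) :=
  [/\ (forall p m m', G (p, m) -> G (p, m') -> m = m'),
      (forall c p m p' m', G (p, m) -> G (p', m') -> G (c *: p + p', c *: m + m')) &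
      (forall x, G (i x, f x))].

(* The empty relation is allowed so that the empty chain has an upper bound. *)
Let candidate (G : set (P * M)) := G = set0 \/ partial_extension G.

Lemma bigcup_chain_candidate (F : set (set (P * M))) :
  F `<=` candidate -> total_on F subset -> candidate (\bigcup_(G in F) G).
Proof.
move=> Fcand Ftot.
have [[G0 FG0 [t0 G0t0]]|nonempty] := boolp.pselect (exists2 G, F G & exists t, G t); last first.
  by left; apply/seteqP; split=> // t [G FG Gt]; apply: nonempty; exists G => //; exists t.
have extF G t : F G -> G t -> partial_extension G.
  by move=> FG Gt; case: (Fcand G FG) => // G0E; move: Gt; rewrite G0E.
have both t1 t2 : (\bigcup_(G in F) G) t1 -> (\bigcup_(G in F) G) t2 ->
    exists G, [/\ F G, partial_extension G, G t1 & G t2].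
  move=> [G1 FG1 G1t] [G2 FG2 G2t].
  case: (Ftot G1 G2 FG1 FG2) => sub.
    by exists G2; split => //; [exact: (extF G2 t2) | exact: sub].
  by exists G1; split => //; [exact: (extF G1 t1) | exact: sub].
right; split.
- by move=> p m m' h1 h2; have [G [_ [fG _ _] G1 G2]] := both _ _ h1 h2; exact: fG G1 G2.
- move=> c p m p' m' h1 h2; have [G [FG [_ cG _] G1 G2]] := both _ _ h1 h2.
  by exists G => //; exact: cG.
- by move=> x; exists G0 => //; case: (extF G0 t0).
Qed.

Lemma graph_partial_extension :
  partial_extension (fun t => exists x, t = (i x, f x)).
Proof.
split.
- by move=> p m m' [x [-> ->]] [x' [/i_inj <- ->]].
- by move=> c p m p' m' [x [-> ->]] [x' [-> ->]]; exists (c *: x + x'); rewrite i_lin f_lin.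
- by move=> x; exists x.
Qed.

(* A partial extension A not defined at p extends to p by sending p to 0,
   which is well defined because every nonzero scalar is invertible. *)
Lemma maximal_extension_total (A : set (P * M)) : partial_extension A ->
  (forall B, A `<` B -> ~ candidate B) -> forall p, exists m, A (p, m).
Proof.
case=> Afun Alin Af Amax p.
have A00 : A (0, 0) by rewrite -(lin0 i_lin) -(lin0 f_lin).
have [//|undef] := boolp.pselect (exists m, A (p, m)); exfalso.
pose B (t : P * M) := exists q m c, A (q, m) /\ t = (q + c *: p, m).
apply: (Amax B).
  split.
    by move=> [q m] Aqm; exists q, m, 0; split => //; rewrite scale0r addr0.
  move=> /(_ (p, 0)) BA; apply: undef; exists 0; apply: BA.
  by exists 0, 0, 1; split => //; rewrite add0r scale1r.
right; split.
- move=> p1 m m' [q [m1 [c [Aq [-> ->]]]]] [q' [m2 [c' [Aq' [e ->]]]]].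
  have [ecc|ncc] := eqVneq c c'.
    by move: e; rewrite ecc => /addIr eq; move: Aq; rewrite eq => Aq; exact: Afun Aq Aq'.
  exfalso; apply: undef.
  have dU : (c - c') \is a GRing.unit by apply: unitR; rewrite subr_eq0.
  have := Alin ((c - c')^-1) _ _ _ _ (Alin (-1) _ _ _ _ Aq Aq') A00; rewrite !addr0 => h.
  eexists; move: h; congr (A (_, _)).
  have -> : -1 *: q + q' = (c - c') *: p.
    by rewrite scaleN1r; apply: (addrI q); rewrite addrA subrr add0r scalerBl addrA e addrK.
  by rewrite scalerA mulVr // scale1r.
- move=> d p1 m p1' m' [q [m1 [c [Aq [-> ->]]]]] [q' [m2 [c' [Aq' [-> ->]]]]].
  exists (d *: q + q'), (d *: m1 + m2), (d * c + c'); split; first exact: Alin.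
  congr (_, _); rewrite scalerDr scalerDl scalerA.
  by rewrite -!addrA; congr (_ + _); rewrite addrC -addrA; congr (_ + _); rewrite addrC.
- by move=> x; exists (i x), (f x), 0; split => //; rewrite scale0r addr0.
Qed.

Lemma linear_extension : exists r : P -> M, linear r /\ forall x, r (i x) = f x.
Proof.
have [A [Acand Amax]] := Zorn_bigcup bigcup_chain_candidate.
have Aext : partial_extension A.
  case: Acand => // A0; exfalso; apply: (Amax _ _ (or_intror graph_partial_extension)).
  rewrite A0; split=> [_ []|] // /(_ (i 0, f 0)) h.
  by have := h (ex_intro _ 0 erefl).
have Atot := maximal_extension_total Aext Amax.
case: Aext => Afun Alin Af.
pose r p := proj1_sig (boolp.constructive_indefinite_description (Atot p)).
have Ar p : A (p, r p) by rewrite /r; case: boolp.constructive_indefinite_description.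
exists r; split => [c x y|x]; apply: Afun (Ar _) _; [exact: Alin | exact: Af].
Qed.

End LinearExtension.

Section Coordinates.
Variables (R : comUnitRingType) (n : nat) (H : hopf_consts R n).

Lemma AbasisE (i j : 'I_n) : Abasis R i 0 j = (i == j)%:R.
Proof. by rewrite /Abasis mxE eqxx /= eq_sym. Qed.

Lemma AmulE (a b : 'rV[R]_n) k : Amul H a b 0 k = \sum_i \sum_j a 0 i * b 0 j * hmul H i j k.
Proof. by rewrite mxE. Qed.

Lemma Amul_basisl i (y : 'rV[R]_n) k : Amul H (Abasis R i) y 0 k = \sum_j y 0 j * hmul H i j k.
Proof.
rewrite AmulE; setoid_rewrite AbasisE.
transitivity (\sum_i' (i == i')%:R * \sum_j y 0 j * hmul H i' j k); first by sum_ring.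
by rewrite sum_delta.
Qed.

Lemma Amul_basisr (x : 'rV[R]_n) j k : Amul H x (Abasis R j) 0 k = \sum_i x 0 i * hmul H i j k.
Proof.
rewrite AmulE; setoid_rewrite AbasisE.
transitivity (\sum_i x 0 i * \sum_j' (j == j')%:R * hmul H i j' k); first by sum_ring.
by setoid_rewrite sum_delta.
Qed.

Lemma AcomulE (a : 'rV[R]_n) i j : Acomul H a i j = \sum_k a 0 k * hcomul H k i j.
Proof. by rewrite mxE. Qed.

Lemma Acomul_basis c i j : Acomul H (Abasis R c) i j = hcomul H c i j.
Proof. rewrite AcomulE; setoid_rewrite AbasisE; exact: sum_delta. Qed.

Lemma Acounit_basis c : Acounit H (Abasis R c) = hcounit H c.
Proof. rewrite /Acounit; setoid_rewrite AbasisE; exact: sum_delta. Qed.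

Lemma Aanti_basis i j : Aanti H (Abasis R i) 0 j = hanti H i j.
Proof. rewrite mxE; setoid_rewrite AbasisE; exact: sum_delta. Qed.

Lemma tmulE (M N : 'M[R]_n) p q : tmul H M N p q = \sum_i \sum_j \sum_k \sum_l
     M i j * N k l * hmul H i k p * hmul H j l q.
Proof. by rewrite mxE. Qed.

Lemma scale_rowE (c : R) (M : 'rV[R]_n) q : (c *: M) 0 q = c * M 0 q.
Proof. by rewrite mxE. Qed.

Lemma AoneE k : Aone H 0 k = hunit H k.
Proof. by rewrite mxE. Qed.

Lemma dual_oneE p : dual_one H 0 p = hcounit H p.
Proof. by rewrite mxE. Qed.

Lemma dual_actE (a f : 'rV[R]_n) p :
  dual_act H a f 0 p = \sum_i f 0 i * \sum_x a 0 x * hmul H p x i.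
Proof. rewrite mxE; by setoid_rewrite Amul_basisl. Qed.

Lemma is_hopf_coords : is_hopf H ->
  hopf_coords (hmul H) (hunit H) (hcomul H) (hcounit H) (hanti H).
Proof.
case=> [[mulA mul1] comulA counit [comulM comul1 counitM counit1] antipode]; split.
- move=> i j k q.
  have := congr1 (fun M : 'rV[R]_n => M 0 q) (mulA (Abasis R i) (Abasis R j) (Abasis R k)).
  rewrite /= Amul_basisr; repeat setoid_rewrite Amul_basisl; repeat setoid_rewrite AbasisE.
  by repeat setoid_rewrite sum_delta.
- move=> j k; have := congr1 (fun M : 'rV[R]_n => M 0 k) (proj1 (mul1 (Abasis R j))).
  rewrite /= Amul_basisr AbasisE; by repeat setoid_rewrite AoneE.
- move=> i k; have := congr1 (fun M : 'rV[R]_n => M 0 k) (proj2 (mul1 (Abasis R i))).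
  rewrite /= Amul_basisl AbasisE; by repeat setoid_rewrite AoneE.
- move=> c x y z; have := comulA (Abasis R c) x y z; by repeat setoid_rewrite Acomul_basis.
- move=> c y; have := congr1 (fun M : 'rV[R]_n => M 0 y) (proj1 (counit (Abasis R c))).
  rewrite AbasisE mxE; by repeat setoid_rewrite Acomul_basis.
- move=> c x; have := congr1 (fun M : 'rV[R]_n => M 0 x) (proj2 (counit (Abasis R c))).
  rewrite AbasisE mxE; by repeat setoid_rewrite Acomul_basis.
- move=> a b p q; have := congr1 (fun M : 'M[R]_n => M p q) (comulM (Abasis R a) (Abasis R b)).
  rewrite /= tmulE AcomulE; repeat setoid_rewrite Acomul_basis;
  repeat setoid_rewrite Amul_basisl; repeat setoid_rewrite AbasisE.
  by repeat setoid_rewrite sum_delta.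
- move=> i j; have := congr1 (fun M : 'M[R]_n => M i j) comul1; rewrite !mxE.
  by repeat setoid_rewrite AoneE.
- move=> a b; have := counitM (Abasis R a) (Abasis R b); rewrite !Acounit_basis /Acounit.
  repeat setoid_rewrite Amul_basisl; repeat setoid_rewrite AbasisE.
  by repeat setoid_rewrite sum_delta.
- by move: counit1; rewrite /Acounit; repeat setoid_rewrite AoneE.
- move=> a q; have := congr1 (fun M : 'rV[R]_n => M 0 q) (proj1 (antipode (Abasis R a))).
  rewrite Acounit_basis scale_rowE AoneE summxE; repeat setoid_rewrite summxE.
  repeat setoid_rewrite scale_rowE; repeat setoid_rewrite Acomul_basis.
  repeat setoid_rewrite Amul_basisr; by repeat setoid_rewrite Aanti_basis.
- move=> a q; have := congr1 (fun M : 'rV[R]_n => M 0 q) (proj2 (antipode (Abasis R a))).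
  rewrite Acounit_basis scale_rowE AoneE summxE; repeat setoid_rewrite summxE.
  repeat setoid_rewrite scale_rowE; repeat setoid_rewrite Acomul_basis.
  repeat setoid_rewrite Amul_basisl; by repeat setoid_rewrite Aanti_basis.
Qed.

Lemma left_integralP (l : 'rV[R]_n) :
  left_integral H l <-> forall y c, \sum_z l 0 z * hmul H y z c = hcounit H y * l 0 c.
Proof.
split.
  move=> hl y c; have := congr1 (fun M : 'rV[R]_n => M 0 c) (hl (Abasis R y)).
  by rewrite /= Amul_basisl scale_rowE Acounit_basis.
move=> hl a; apply/rowP => c; rewrite scale_rowE AmulE /Acounit.
transitivity (\sum_i a 0 i * \sum_j l 0 j * hmul H i j c); first by sum_ring.
setoid_rewrite hl; sum_ring.
Qed.

End Coordinates.

Section ModuleAlgebra.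
Variables (R : comUnitRingType) (n m : nat) (H : hopf_consts R n) (S : modalg_consts R n m).

Lemma Aact_linearl (s : 'rV[R]_m) : linear (fun a => Aact S a s).
Proof.
move=> c a b; apply/rowP => k; rewrite !mxE big_distrr -big_split /=; apply: eq_bigr => i _.
rewrite big_distrr -big_split /=; apply: eq_bigr => j _; rewrite !mxE; ring.
Qed.

Lemma Aact_linearr (a : 'rV[R]_n) : linear (Aact S a).
Proof.
move=> c s t; apply/rowP => k; rewrite !mxE big_distrr -big_split /=; apply: eq_bigr => i _.
rewrite big_distrr -big_split /=; apply: eq_bigr => j _; rewrite !mxE; ring.
Qed.

Hypothesis hS : is_module_algebra H S.

Lemma left_integral_invariant (l : 'rV[R]_n) s a : left_integral H l ->
  Aact S a (Aact S l s) = Acounit H a *: Aact S l s.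
Proof.
case: hS => _ actM _ _ _ hl.
by rewrite -actM hl (linZ (Aact_linearl _)).
Qed.

End ModuleAlgebra.

Section TameCriterion.
Variables (R : comUnitRingType) (n m : nat) (H : hopf_consts R n) (S : modalg_consts R n m).
Hypotheses (hH : is_hopf H) (hS : is_module_algebra H S).
Let hA := is_hopf_coords hH.

(* integral_map L f = L_(1) f(S(L_(2))); for a left integral L it is A-linear. *)
Definition integral_map (L f : 'rV[R]_n) : 'rV[R]_n :=
  \row_i \sum_j Acomul H L i j * \sum_p hanti H j p * f 0 p.

Lemma integral_mapE L f i :
  integral_map L f 0 i = \sum_j Acomul H L i j * \sum_p hanti H j p * f 0 p.
Proof. by rewrite mxE. Qed.

Lemma integral_map_linear L : linear (integral_map L).
Proof.
move=> c f f'; apply/rowP => i; rewrite !mxE.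
have addE p : (c *: f + f') 0 p = c * f 0 p + f' 0 p by rewrite !mxE.
have mulrDr' (x y z : R) : x * (y + z) = x * y + x * z by rewrite mulrDr.
have big_split' (F G : 'I_n -> R) : \sum_i (F i + G i) = \sum_i F i + \sum_i G i.
  by rewrite big_split.
setoid_rewrite addE; repeat (setoid_rewrite mulrDr' || setoid_rewrite big_split').
by congr (_ + _); sum_ring.
Qed.

Lemma integral_map_dual_act L a f : left_integral H L ->
  integral_map L (dual_act H a f) = Amul H a (integral_map L f).
Proof.
move/left_integralP => hL.
apply/rowP => k; rewrite integral_mapE AmulE; setoid_rewrite integral_mapE.
setoid_rewrite dual_actE; setoid_rewrite AcomulE.
transitivity (\sum_x \sum_i a 0 x * f 0 i *
   (\sum_j \sum_p (\sum_a0 L 0 a0 * hcomul H a0 k j) * hanti H j p * hmul H p x i)).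
  pull_sums; align_sums [:: 4;3;0;1;0]%N; ring.
setoid_rewrite (integral_comul_antipode hA (L := fun z => L 0 z) hL).
pull_sums; align_sums [:: 0;1;1;1;0]%N; ring.
Qed.

Lemma integral_map_one L : integral_map L (dual_one H) = L.
Proof.
apply/rowP => i; rewrite integral_mapE; setoid_rewrite dual_oneE.
setoid_rewrite (counit_antipode hA); setoid_rewrite AcomulE.
transitivity (\sum_a L 0 a * \sum_j hcomul H a i j * hcounit H j); first by sum_ring.
by setoid_rewrite (hc_counitr hA); rewrite sum_delta_r'.
Qed.

Lemma IS_eq_R_dual_hom : IS_eq_R H S ->
  exists g, dual_module_hom H S g /\ g (dual_one H) = Sone S.
Proof.
move=> hIS.
have [k [l [s [hl hsum]]]] : exists k (l : 'I_k -> 'rV[R]_n) (s : 'I_k -> 'rV[R]_m),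
    (forall i, left_integral H (l i)) /\ Sone S = \sum_(i < k) Aact S (l i) (s i).
  by apply/(hIS (Sone S)); exists 1; rewrite scale1r.
case: hS => _ actM _ _ _.
exists (fun f => \sum_t Aact S (integral_map (l t) f) (s t)); split; first split.
- move=> c f f'.
  under eq_bigr do rewrite integral_map_linear (Aact_linearl _ _ _ _).
  by rewrite big_split /= scaler_sumr.
- move=> a f; rewrite (lin_sum (Aact_linearr S a)).
  by apply: eq_bigr => t _; rewrite -actM integral_map_dual_act.
- by rewrite hsum; apply: eq_bigr => t _; rewrite integral_map_one.
Qed.

Definition integral_vec (j : 'I_n) : 'rV[R]_n := \row_a lam (hmul H) (hcomul H) (hanti H) j a.
Definition antipode_col (j : 'I_n) : 'rV[R]_n := \row_a hanti H a j.

Lemma integral_vecE j a : integral_vec j 0 a = lam (hmul H) (hcomul H) (hanti H) j a.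
Proof. by rewrite mxE. Qed.

Lemma antipode_colE j a : antipode_col j 0 a = hanti H a j.
Proof. by rewrite mxE. Qed.

Lemma integral_vec_coords j y c :
  \sum_z integral_vec j 0 z * hmul H y z c = hcounit H y * integral_vec j 0 c.
Proof.
rewrite integral_vecE; setoid_rewrite integral_vecE; exact: (lam_left_integral hA).
Qed.

Lemma dual_one_integral_span : \sum_j dual_act H (integral_vec j) (antipode_col j) = dual_one H.
Proof.
apply/rowP => p; rewrite summxE dual_oneE; setoid_rewrite dual_actE.
setoid_rewrite integral_vec_coords.
transitivity (hcounit H p * \sum_j \sum_a integral_vec j 0 a * antipode_col j 0 a).
  by sum_ring.
setoid_rewrite integral_vecE; setoid_rewrite antipode_colE.
by rewrite (lam_antipode_trace hA) mulr1.
Qed.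

Lemma dual_hom_IS_eq_R g : invariants_eq_R H S -> dual_module_hom H S g ->
  g (dual_one H) = Sone S -> IS_eq_R H S.
Proof.
move=> hInv [glin gact] g1 x; split.
- case=> k [l [s [hl ->]]]; apply/hInv => a.
  rewrite (lin_sum (Aact_linearr S a)) scaler_sumr; apply: eq_bigr => t _.
  exact: left_integral_invariant.
- case=> r ->; exists n, (fun j => r *: integral_vec j), (fun j => g (antipode_col j)); split.
  + move=> j; apply/left_integralP => y c; rewrite scale_rowE; setoid_rewrite scale_rowE.
    under eq_bigr do rewrite -mulrA; rewrite -mulr_sumr integral_vec_coords; ring.
  + under eq_bigr do rewrite (linZ (Aact_linearl S _)) -gact.
    by rewrite -scaler_sumr -(lin_sum glin) dual_one_integral_span g1.
Qed.

End TameCriterion.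

Section Averaging.
Variables (R : comUnitRingType) (n m : nat) (H : hopf_consts R n) (S : modalg_consts R n m).
Hypothesis hH : is_hopf H.
Let hA := is_hopf_coords hH.
Variable g : 'rV[R]_n -> 'rV[R]_m.
Hypotheses (hg : dual_module_hom H S g) (g1 : g (dual_one H) = Sone S).
Variables (M : lmodType R) (sa : M -> 'rV[R]_m -> M) (rho : M -> 'I_n -> M).
Hypothesis hM : rel_hopf_module H S sa rho.
Variables (P : lmodType R) (rhoP : P -> 'I_n -> P) (r : P -> M).
Hypotheses (hP : is_comodule H rhoP) (r_lin : linear r).

(* antipode_dual_mul k j = S^*(e_k^* ) e_j^* in A^*. *)
Definition antipode_dual_mul (k j : 'I_n) : 'rV[R]_n :=
  \row_q \sum_p hanti H p k * hcomul H q p j.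

(* Doi's averaging of r: p |-> r(p_(0))_(0) . g(S^*(r(p_(0))_(1)) p_(1)). *)
Definition average (p : P) : M :=
  \sum_j \sum_k sa (rho (r (rhoP p j)) k) (g (antipode_dual_mul k j)).

Lemma antipode_dual_mulE k j q : antipode_dual_mul k j 0 q = \sum_p hanti H p k * hcomul H q p j.
Proof. by rewrite mxE. Qed.

Lemma antipode_dual_mul_sum t :
  \sum_j \sum_k hmul H k j t *: antipode_dual_mul k j = hunit H t *: dual_one H.
Proof.
apply/rowP => q; rewrite summxE scale_rowE dual_oneE; setoid_rewrite summxE.
setoid_rewrite scale_rowE; setoid_rewrite antipode_dual_mulE.
rewrite mulrC -(hc_antipodel hA); sum_ring.
Qed.

Let rho_linear k : linear (rho^~ k).
Proof. by case: hM => [[[+ _ _] _] _ _ _ _] c x y => ->. Qed.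

Let sa_linearl s : linear (sa^~ s).
Proof. by case: hM => [[_ +] _ _ _ _] c x y => ->. Qed.

Let sa_g_linear x : linear (fun v => sa x (g v)).
Proof. by case: hM hg => _ saR _ _ _ [glin _] c v w; rewrite glin saR. Qed.

Lemma average_linear : linear average.
Proof.
case: hP => rhoP_lin _ _ c p p'; rewrite /average.
under eq_bigr => j _ do (under eq_bigr => k _ do
  rewrite rhoP_lin r_lin (rho_linear k) (sa_linearl _)).
rewrite scaler_sumr -big_split /=; apply: eq_bigr => j _.
by rewrite scaler_sumr -big_split.
Qed.

Lemma average_colinear p t : rho (average p) t = average (rhoP p t).
Proof.
case: hP hg hM => _ rhoPA _ [_ gact] [[[_ rhoA _] _] _ _ _ saH].
have saSum (I : finType) (c : I -> R) (v : I -> M) s :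
  sa (\sum_i c i *: v i) s = \sum_i c i *: sa (v i) s by exact: (lin_sumZ (sa_linearl s) c v).
have rhoSum (I : finType) (c : I -> R) (v : I -> M) k :
  rho (\sum_i c i *: v i) k = \sum_i c i *: rho (v i) k by exact: (lin_sumZ (rho_linear k) c v).
have rSum (I : finType) (c : I -> R) (v : I -> P) :
  r (\sum_i c i *: v i) = \sum_i c i *: r (v i) by exact: (lin_sumZ r_lin c v).
have gSum (I : finType) (c : I -> R) (v : I -> 'rV[R]_n) x :
  sa x (g (\sum_i c i *: v i)) = \sum_i c i *: sa x (g (v i)) by exact: (lin_sumZ (sa_g_linear x) c v).
have gS (I : finType) (v : I -> 'rV[R]_n) x :
  sa x (g (\sum_i v i)) = \sum_i sa x (g (v i)) by exact: (lin_sum (sa_g_linear x) _ _ v).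
have rhoS (I : finType) (v : I -> M) k :
  rho (\sum_i v i) k = \sum_i rho (v i) k by exact: (lin_sum (rho_linear k) _ _ v).
transitivity (\sum_j \sum_s sa (rho (r (rhoP p j)) s) (g (\sum_k \sum_a \sum_b
   (hcomul H t a b * hmul H a k s) *: dual_act H (Abasis R b) (antipode_dual_mul k j)))).
  rewrite rhoS; setoid_rewrite rhoS; setoid_rewrite saH; setoid_rewrite rhoA.
  setoid_rewrite <- gact; setoid_rewrite saSum; setoid_rewrite scaler_sumr.
  setoid_rewrite scalerA; setoid_rewrite gS; setoid_rewrite gS; setoid_rewrite gSum.
  by align_sums [:: 0; 3; 0; 0; 0]%N.
transitivity (\sum_v \sum_k sa (rho (r (rhoP p v)) k)
   (g (\sum_j hmul H j t v *: antipode_dual_mul k j))).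
  apply: eq_bigr => v _; apply: eq_bigr => k _; congr (sa _ (g _)).
  apply/rowP => q; repeat setoid_rewrite summxE; repeat setoid_rewrite scale_rowE.
  setoid_rewrite dual_actE; setoid_rewrite AbasisE; setoid_rewrite sum_delta.
  setoid_rewrite antipode_dual_mulE; exact: (antipode_dual_mul_equivariance hA).
rewrite /average; symmetry; setoid_rewrite rhoPA; setoid_rewrite rSum; setoid_rewrite rhoSum.
setoid_rewrite saSum; setoid_rewrite gSum.
by align_sums [:: 2; 1; 0]%N.
Qed.

Lemma average_fixed p : (forall j, r (rhoP p j) = rho (r p) j) -> average p = r p.
Proof.
case: hM => [[[_ rhoA rho1] _] _ _ sa1 _] colin; rewrite /average.
under eq_bigr => j _ do rewrite colin.
under eq_bigr => j _ do (under eq_bigr => k _ do rewrite rhoA (lin_sumZ (sa_linearl _))).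
sum_to_front 2%N.
transitivity (\sum_t sa (rho (r p) t) (g (\sum_j \sum_k hmul H k j t *: antipode_dual_mul k j))).
  apply: eq_bigr => t _; rewrite (lin_sum (sa_g_linear _)); apply: eq_bigr => j _.
  by rewrite (lin_sumZ (sa_g_linear _)).
under eq_bigr do rewrite antipode_dual_mul_sum (linZ (sa_g_linear _)) g1 sa1.
exact: rho1.
Qed.

End Averaging.

Lemma rel_hopf_module_injective (R : comUnitRingType) (n m : nat)
    (H : hopf_consts R n) (S : modalg_consts R n m) g
    (M : lmodType R) (sa : M -> 'rV[R]_m -> M) (rho : M -> 'I_n -> M) :
  (forall x : R, x != 0 -> x \is a GRing.unit) -> is_hopf H ->
  dual_module_hom H S g -> g (dual_one H) = Sone S ->
  rel_hopf_module H S sa rho -> injective_comodule H rho.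
Proof.
move=> unitR hH hg g1 hM N P rhoN rhoP i f _ hP [i_lin i_com] i_inj [f_lin f_com].
have [r [r_lin r_ext]] := linear_extension unitR i_lin i_inj f_lin.
exists (average H g sa rho rhoP r); split; first split.
- exact: (average_linear g hM hP r_lin).
- by move=> p t; rewrite (average_colinear hH hg hM hP r_lin).
- by move=> x; rewrite (average_fixed hH hg g1 hM) // => j; rewrite i_com !r_ext f_com.
Qed.

Theorem mainTheorem1 (R : comUnitRingType) (n m : nat)
    (H : hopf_consts R n) (S : modalg_consts R n m) :
  local_ring R -> is_hopf H -> is_module_algebra H S ->
  faithful_action S -> m = n -> invariants_eq_R H S ->
  (tame H S <->
     exists g : 'rV[R]_n -> 'rV[R]_m,
       dual_module_hom H S g /\ g (dual_one H) = Sone S)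
  /\
  ((forall x : R, x != 0 -> x \is a GRing.unit) -> tame H S ->
     forall (M : lmodType R) (sa : M -> 'rV[R]_m -> M) (rho : M -> 'I_n -> M),
       rel_hopf_module H S sa rho -> injective_comodule H rho).
Proof.
(* Locality only makes finite projective modules free, which the coordinate
   presentation of A and S already presupposes. *)
move=> _ hH hS faithful mn hInv.
have tameP : tame H S <-> exists g : 'rV[R]_n -> 'rV[R]_m,
    dual_module_hom H S g /\ g (dual_one H) = Sone S.
  split=> [[_ _ _ _ hIS]|[g [hg g1]]]; first exact: IS_eq_R_dual_hom.
  by split => //; exact: dual_hom_IS_eq_R hInv hg g1.
split=> // unitR /tameP [g [hg g1]] M sa rho.
exact: rel_hopf_module_injective unitR hH hg g1.
Qed.
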